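(* Let \(A\) be a geometrically fast set of positive bumps with a fixed marking witnessing this. Suppose \(x_0,x_1\in I\) and for each \(i<2\), \(\mathtt{u}_i\) is an \(A\)-word locally reduced at \(x_i\) with \(x_i\notin\operatorname{src}(\mathtt{u}_i)\). If \(|\mathtt{u}_0|\le|\mathtt{u}_1|\) and \(x_0u_0=x_1u_1\), then \(\mathtt{u}_0\) is a suffix of \(\mathtt{u}_1\). In particular, if \(t\in I\) lies in none of the feet of elements of \(A^{\pm}\), and \(\mathtt{u}\), \(\mathtt{v}\) are \(A\)-words locally reduced at \(t\) with \(tu=tv\), then \(\mathtt{u}=\mathtt{v}\).
   Context: \(I=[0,1]\); homeomorphisms act on the right. A positive bump is an element of \(\operatorname{Homeo}_+(I)\) whose support \(\{t:ta\neq t\}\) is a single open interval \((x,y)\) on which \(ta>t\); \(x\), \(y\) are its left and right transition points. \(A\) is geometrically proper if no point is a left transition point of two distinct elements, nor a right transition point of two distinct elements. A marking assigns each \(a\in A\) a marker \(t\in\operatorname{supt}(a)\); for \(a\) with support \((x,y)\), \(\operatorname{src}(a)=(x,t)\), \(\operatorname{dest}(a)=[ta,y)\), \(\operatorname{src}(a^{-1})=\operatorname{dest}(a)\), \(\operatorname{dest}(a^{-1})=\operatorname{src}(a)\); these are the feet. \(A\) is geometrically fast if geometrically proper and the marking makes the feet pairwise disjoint. \(A^{\pm}=A\cup A^{-1}\). An \(A\)-word is a finite string over \(A^{\pm}\); \(|\mathtt{u}|\) is its length, \(u\) its evaluation (acting on the right). \(\mathtt{w}\) is locally reduced at \(t\)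 if it is freely reduced and for every prefix \(\mathtt{ua}\) (\(a\in A^\pm\)), \(tua\neq tu\). For a nonempty word, \(\operatorname{src}(\mathtt{w})\) is the source of its first symbol; \(\operatorname{src}(\varepsilon)=\emptyset\). *)

From Stdlib Require Import Reals List.
Import ListNotations.
Open Scope R_scope.

Definition inI (t : R) : Prop := 0 <= t <= 1.

(* f : I -> I is an orientation-preserving homeomorphism with inverse g
   (behaviour outside I is irrelevant). *)
Definition contI (f : R -> R) : Prop :=
  forall t, inI t -> forall eps, 0 < eps ->
    exists delta, 0 < delta /\
      forall s, inI s -> Rabs (s - t) < delta -> Rabs (f s - f t) < eps.

Definition is_homeo_plus (f g : R -> R) : Prop :=
  (forall t, inI t -> inI (f t)) /\
  (forall t, inI t -> inI (g t)) /\
  (forall t, inI t -> g (f t) = t) /\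
  (forall t, inI t -> f (g t) = t) /\
  contI f /\ contI g /\
  (forall s t, inI s -> inI t -> s < t -> f s < f t).

Definition is_pos_bump (f : R -> R) (x y : R) : Prop :=
  0 <= x /\ x < y /\ y <= 1 /\
  (forall t, inI t -> (f t <> t <-> x < t < y)) /\
  (forall t, x < t < y -> t < f t).

Section Words.
(* A is given as an indexed family a : J -> bumps, with inverses ainv,
   transition points lo j, hi j, and marking m j. *)
Context {J : Type}.
Variables a ainv : J -> R -> R.
Variables lo hi m : J -> R.

(* letters of A^{+-}: (j,false) = a_j, (j,true) = a_j^{-1} *)
Definition letter := (J * bool)%type.
Definition word := list letter.

Definition act (l : letter) (t : R) : R :=
  if snd l then ainv (fst l) t else a (fst l) t.

(* right action: t . (l1 l2 ... ln) = (...((t l1) l2)...) ln *)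
Definition eval (t : R) (w : word) : R :=
  fold_left (fun s l => act l s) w t.

Definition src_pos (j : J) (t : R) : Prop := lo j < t < m j.
Definition dest_pos (j : J) (t : R) : Prop := a j (m j) <= t < hi j.

Definition lsrc (l : letter) : R -> Prop :=
  if snd l then dest_pos (fst l) else src_pos (fst l).
Definition ldest (l : letter) : R -> Prop :=
  if snd l then src_pos (fst l) else dest_pos (fst l).

Definition wsrc (w : word) (t : R) : Prop :=
  match w with [] => False | l :: _ => lsrc l t end.

Definition in_some_foot (t : R) : Prop :=
  exists l : letter, lsrc l t \/ ldest l t.

Definition geom_proper : Prop :=
  forall j k, (lo j = lo k -> j = k) /\ (hi j = hi k -> j = k).

Definition foot (f : J * bool) : R -> Prop :=
  if snd f then dest_pos (fst f) else src_pos (fst f).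

Definition geom_fast : Prop :=
  geom_proper /\
  (forall j, lo j < m j < hi j) /\
  (forall f g : J * bool, f <> g -> forall t, ~ (foot f t /\ foot g t)).

Definition inverse_letters (l l' : letter) : Prop :=
  fst l = fst l' /\ snd l' = negb (snd l).

Definition freely_reduced (w : word) : Prop :=
  forall p q l l', w = p ++ l :: l' :: q -> ~ inverse_letters l l'.

Definition loc_reduced (t : R) (w : word) : Prop :=
  freely_reduced w /\
  forall u l q, w = u ++ l :: q -> act l (eval t u) <> eval t u.

Definition is_suffix (u w : word) : Prop := exists p, w = p ++ u.

End Words.

(* Ping-pong: if a letter moves a point lying outside its source, it puts the
   point into its destination.  Free reduction forbids the next letter to be
   the inverse one, and that inverse letter is the only one whose source meets
   the destination, so the point is again outside the next source.  Hence the
   endpoint x u of a locally reduced word started outside src(u) lies in the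
   destination of the last letter of u.  The feet are pairwise disjoint, so this
   endpoint determines the last letter; cancelling it and inducting shows that
   the shorter word is a suffix of the longer one.  For the second claim, t v = t u
   with v = p u forces t p = t, which is impossible for nonempty p because t
   would then lie in the destination of the last letter of p. *)

From Stdlib Require Import Reals List Lra Lia Classical.
Open Scope R_scope.
Import ListNotations.

Section PingPong.

Variable J : Type.
Variables a ainv : J -> R -> R.
Variables lo hi m : J -> R.

Hypothesis homeo : forall j, is_homeo_plus (a j) (ainv j).
Hypothesis bump : forall j, is_pos_bump (a j) (lo j) (hi j).
Hypothesis fast : geom_fast a lo hi m.

Lemma eval_app x (p q : @word J) :
  eval a ainv x (p ++ q) = eval a ainv (eval a ainv x p) q.
Proof. apply fold_left_app. Qed.

Lemma act_inI l x : inI x -> inI (act a ainv l x).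
Proof.
  destruct l as [j []]; unfold act; simpl; apply homeo.
Qed.

Lemma act_inj l x y :
  inI x -> inI y -> act a ainv l x = act a ainv l y -> x = y.
Proof.
  destruct l as [j b]; destruct (homeo j) as (_ & _ & a_ainv & ainv_a & _).
  unfold act; simpl; intros Hx Hy E; destruct b.
  - now rewrite <- (ainv_a x Hx), <- (ainv_a y Hy), E.
  - now rewrite <- (a_ainv x Hx), <- (a_ainv y Hy), E.
Qed.

Lemma eval_inI (w : @word J) x : inI x -> inI (eval a ainv x w).
Proof.
  revert x; induction w as [|l w IH]; intros x Hx; simpl; auto using act_inI.
Qed.

Lemma eval_inj (w : @word J) x y :
  inI x -> inI y -> eval a ainv x w = eval a ainv y w -> x = y.
Proof.
  revert x y; induction w as [|l w IH]; intros x y Hx Hy E; simpl in E; auto.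
  apply (act_inj l); auto using act_inI.
Qed.

Lemma bump_fixes_endpoints j : a j (lo j) = lo j /\ a j (hi j) = hi j.
Proof.
  destruct (bump j) as (lo_ge0 & lo_hi & hi_le1 & supp & _).
  split; apply NNPP; intro moved; apply supp in moved; unfold inI; lra.
Qed.

Lemma bump_le j s t : inI s -> inI t -> s <= t -> a j s <= a j t.
Proof.
  destruct (homeo j) as (_ & _ & _ & _ & _ & _ & incr).
  intros Hs Ht [lt | ->]; [left; auto | lra].
Qed.

Lemma dest_pos_a j x :
  inI x -> m j <= x < hi j -> dest_pos a hi m j (a j x).
Proof.
  destruct (homeo j) as (_ & _ & _ & _ & _ & _ & incr).
  destruct (bump j) as (lo_ge0 & _ & hi_le1 & _ & _).
  destruct fast as (_ & marker & _); specialize (marker j).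
  intros Hx x_in; split.
  - apply bump_le; auto; unfold inI; lra.
  - rewrite <- (proj2 (bump_fixes_endpoints j)).
    apply incr; auto; unfold inI; lra.
Qed.

Lemma src_pos_ainv j x :
  inI x -> lo j < x < a j (m j) -> src_pos lo m j (ainv j x).
Proof.
  destruct (homeo j) as (_ & ainv_I & _ & a_ainv & _).
  destruct (bump j) as (lo_ge0 & _ & hi_le1 & _ & _).
  destruct fast as (_ & marker & _); specialize (marker j).
  destruct (bump_fixes_endpoints j) as [fix_lo _].
  intros Hx x_in.
  assert (Hy : inI (ainv j x)) by auto.
  assert (back : a j (ainv j x) = x) by auto.
  split; apply Rnot_le_lt; intro c.
  - apply (bump_le j) in c; [| auto | unfold inI; lra]; lra.
  - apply (bump_le j) in c; [| unfold inI; lra | auto]; lra.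
Qed.

Lemma ldest_act l x :
  inI x -> act a ainv l x <> x -> ~ lsrc a lo hi m l x ->
  ldest a lo hi m l (act a ainv l x).
Proof.
  destruct l as [j b].
  destruct (homeo j) as (_ & _ & ainv_a & _).
  destruct (bump j) as (_ & _ & _ & supp & _).
  unfold act, lsrc, ldest, src_pos, dest_pos; simpl; intros Hx moved not_src.
  destruct b.
  - assert (supp_x : lo j < x < hi j).
    { apply supp; auto; intro fixed; apply moved.
      rewrite <- fixed at 1; auto. }
    apply src_pos_ainv; auto; split; [lra |].
    apply Rnot_le_lt; intro c; apply not_src; lra.
  - assert (supp_x : lo j < x < hi j) by (apply supp; auto).
    apply dest_pos_a; auto; split; [| lra].
    apply Rnot_lt_le; intro c; apply not_src; lra.
Qed.

Lemma foot_unique f g t : foot a lo hi m f t -> foot a lo hi m g t -> f = g.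
Proof.
  destruct fast as (_ & _ & disjoint); intros Hf Hg.
  apply NNPP; intro neq; exact (disjoint f g neq t (conj Hf Hg)).
Qed.

Lemma lsrc_as_foot (l : letter) t : lsrc a lo hi m l t = foot a lo hi m l t.
Proof. now destruct l as [j []]. Qed.

Lemma ldest_as_foot (l : letter) t :
  ldest a lo hi m l t = foot a lo hi m (fst l, negb (snd l)) t.
Proof. now destruct l as [j []]. Qed.

Lemma ldest_unique (l l' : letter) t :
  ldest a lo hi m l t -> ldest a lo hi m l' t -> l = l'.
Proof.
  rewrite !ldest_as_foot; intros Hl Hl'.
  pose proof (foot_unique _ _ t Hl Hl') as E.
  destruct l as [j []], l' as [j' []]; simpl in E; congruence.
Qed.

Lemma ldest_lsrc_inverse (l l' : letter) t :
  ldest a lo hi m l t -> lsrc a lo hi m l' t -> inverse_letters l l'.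
Proof.
  rewrite ldest_as_foot; intros Hd Hs; rewrite lsrc_as_foot in Hs.
  rewrite <- (foot_unique _ _ t Hd Hs); split; reflexivity.
Qed.

Lemma loc_reduced_moves x l (w : @word J) :
  loc_reduced a ainv x (l :: w) -> act a ainv l x <> x.
Proof. intros [_ moves]; exact (moves [] l w eq_refl). Qed.

Lemma loc_reduced_behead x l (w : @word J) :
  loc_reduced a ainv x (l :: w) -> loc_reduced a ainv (act a ainv l x) w.
Proof.
  intros [free moves]; split.
  - intros p q l1 l2 E; apply (free (l :: p) q); now rewrite E.
  - intros u l1 q E; apply (moves (l :: u) l1 q); now rewrite E.
Qed.

Lemma loc_reduced_prefix x (w q : @word J) :
  loc_reduced a ainv x (w ++ q) -> loc_reduced a ainv x w.
Proof.
  intros [free moves]; split.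
  - intros p q' l1 l2 E; apply (free p (q' ++ q)); now rewrite E, <- app_assoc.
  - intros u l1 q' E; apply (moves u l1 (q' ++ q)); now rewrite E, <- app_assoc.
Qed.

Lemma not_wsrc_prefix x (w q : @word J) :
  ~ wsrc a lo hi m (w ++ q) x -> ~ wsrc a lo hi m w x.
Proof. now destruct w. Qed.

Lemma not_wsrc_behead x l (w : @word J) :
  inI x -> loc_reduced a ainv x (l :: w) -> ~ wsrc a lo hi m (l :: w) x ->
  ~ wsrc a lo hi m w (act a ainv l x).
Proof.
  intros Hx red not_src; destruct w as [|l' w]; simpl; auto.
  intro in_src.
  apply (proj1 red [] w l l' eq_refl), (ldest_lsrc_inverse _ _ (act a ainv l x));
    auto.
  apply ldest_act; [assumption | exact (loc_reduced_moves _ _ _ red) | exact not_src].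
Qed.

Lemma ldest_last (w : @word J) l x :
  inI x -> loc_reduced a ainv x (w ++ [l]) -> ~ wsrc a lo hi m (w ++ [l]) x ->
  ldest a lo hi m l (eval a ainv x (w ++ [l])).
Proof.
  revert x; induction w as [|l1 w IH]; intros x Hx red not_src; simpl.
  - apply ldest_act; eauto using loc_reduced_moves.
  - apply IH; eauto using act_inI, loc_reduced_behead, not_wsrc_behead.
Qed.

Lemma loc_reduced_suffix x0 x1 (u0 u1 : @word J) :
  inI x0 -> inI x1 ->
  loc_reduced a ainv x0 u0 -> loc_reduced a ainv x1 u1 ->
  ~ wsrc a lo hi m u0 x0 -> ~ wsrc a lo hi m u1 x1 ->
  (length u0 <= length u1)%nat ->
  eval a ainv x0 u0 = eval a ainv x1 u1 ->
  is_suffix u0 u1.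
Proof.
  revert u1; induction u0 as [|l0 u0 IH] using rev_ind;
    intros u1 Hx0 Hx1 red0 red1 src0 src1 len E.
  { exists u1; now rewrite app_nil_r. }
  destruct u1 as [|l1 u1 _] using rev_ind.
  { rewrite length_app in len; simpl in len; lia. }
  assert (l1 = l0) as ->.
  { apply (ldest_unique _ _ (eval a ainv x1 (u1 ++ [l1]))); [| rewrite <- E];
      apply ldest_last; auto. }
  rewrite !eval_app in E; apply act_inj in E; auto using eval_inI.
  rewrite !length_app in len; simpl in len.
  destruct (IH u1) as [p ->];
    eauto using loc_reduced_prefix, not_wsrc_prefix; try lia.
  exists p; now rewrite app_assoc.
Qed.

Lemma loc_reduced_eval_inj_le t (u v : @word J) :
  inI t -> ~ in_some_foot a lo hi m t ->
  loc_reduced a ainv t u -> loc_reduced a ainv t v ->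
  (length u <= length v)%nat ->
  eval a ainv t u = eval a ainv t v -> u = v.
Proof.
  intros Ht no_foot red_u red_v len E.
  assert (no_src : forall w : @word J, ~ wsrc a lo hi m w t).
  { intros [|l w] src; [contradiction | apply no_foot; exists l; now left]. }
  destruct (loc_reduced_suffix t t u v) as [p ->]; auto.
  rewrite eval_app in E; apply eval_inj in E; auto using eval_inI.
  destruct p as [|l p _] using rev_ind; [reflexivity | exfalso].
  apply no_foot; exists l; right; rewrite E.
  apply ldest_last; eauto using loc_reduced_prefix.
Qed.

End PingPong.

Theorem lemma5p4 (J : Type) (a ainv : J -> R -> R) (lo hi m : J -> R) :
  (forall j, is_homeo_plus (a j) (ainv j)) ->
  (forall j, is_pos_bump (a j) (lo j) (hi j)) ->
  geom_fast a lo hi m ->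
  (forall (x0 x1 : R) (u0 u1 : word (J:=J)),
     inI x0 -> inI x1 ->
     loc_reduced a ainv x0 u0 -> loc_reduced a ainv x1 u1 ->
     ~ wsrc a lo hi m u0 x0 -> ~ wsrc a lo hi m u1 x1 ->
     (length u0 <= length u1)%nat ->
     eval a ainv x0 u0 = eval a ainv x1 u1 ->
     is_suffix u0 u1)
  /\
  (forall (t : R) (u v : word (J:=J)),
     inI t -> ~ in_some_foot a lo hi m t ->
     loc_reduced a ainv t u -> loc_reduced a ainv t v ->
     eval a ainv t u = eval a ainv t v ->
     u = v).
Proof.
  intros homeo bump fast; split.
  - exact (loc_reduced_suffix J a ainv lo hi m homeo bump fast).
  - intros t u v Ht no_foot red_u red_v E.
    destruct (Nat.le_ge_cases (length u) (length v)).
    + apply (loc_reduced_eval_inj_le J a ainv lo hi m homeo bump fast t); auto.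
    + symmetry; apply (loc_reduced_eval_inj_le J a ainv lo hi m homeo bump fast t); auto.
Qed.
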